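(* For any finite abelian group $G$ and positive integer $n$, the monoid $I_n(\hat G)$ is left inductive and right inductive.
   Context: $\hat G=G\sqcup\{0\}$ with $0$ absorbing. $I_n(\hat G)$ is the monoid of $n\times n$ matrices with entries in $\hat G$ having at most one nonzero entry in each row and each column, under matrix multiplication; it is a $\hat G$-linear monoid with $G$ embedded as scalar matrices. $\mathrm{Vect}_{\hat G}$: objects are finite pointed sets with an action of $\hat G$ ($0v=0$, $g0=0$) such that $G$ acts freely on nonzero elements; morphisms $f$ satisfy $f(0)=0$, $f(gv)=gf(v)$, $f(v_1)=f(v_2)\neq0\Rightarrow Gv_1=Gv_2$. For a monoid $M$ with zero and $a\in M$: $J(a)=MaM$, $I(a)=\{x\in J(a):MxM\neq J(a)\}$, $P(a)=(J(a)\setminus I(a))\cup\{0\}$. $M$ acts on $P(a)$ by left translation ($m\cdot x=mx$ if $mx\in J(a)\setminus I(a)$, else $0$) and on the right by right translation analogously. $M$ is left (resp. right) inductive if for every idempotent $e\in M$, each left (resp. right) translation by an element of $M$ is a morphism of $\mathrm{Vect}_{\hat G}$ on $P(e)$ (so that $P(e)$ is a $\hat G$-linear representation of $M$, resp. of $M^{\mathrm{op}}$, with $0$ acting as zero and $G$ as scalars). *)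

From mathcomp Require Import all_boot all_fingroup.
Set Implicit Arguments. Unset Strict Implicit. Unset Printing Implicit Defensive.

(* \hat G = G ⊔ {0} is modelled as [option gT]: [None] is the absorbing 0. *)
Section RookMonoid.
Variables (gT : finGroupType) (n : nat).

Definition mat := {ffun 'I_n * 'I_n -> option gT}.

Definition isI (A : mat) : bool :=
  [forall i, forall j, forall j',
     ((A (i, j) != None) && (A (i, j') != None)) ==> (j == j')] &&
  [forall j, forall i, forall i',
     ((A (i, j) != None) && (A (i', j) != None)) ==> (i == i')].

(* matrix multiplication: (AB)_{ik} = sum_j A_{ij} B_{jk}; on I_n(\hat G)
   at most one term is nonzero, so the sum is that term (or 0). *)
Definition mmul (A B : mat) : mat :=
  [ffun ik => match [pick j | (A (ik.1, j) != None) && (B (j, ik.2) != None)] with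
              | Some j => match A (ik.1, j), B (j, ik.2) with
                          | Some a, Some b => Some (a * b)%g
                          | _, _ => None
                          end
              | None => None
              end].

Definition zero : mat := [ffun _ => None].

Definition scal (g : gT) : mat := [ffun ij => if ij.1 == ij.2 then Some g else None].

Definition inJ (a x : mat) : bool :=
  isI x && [exists m, exists m', [&& isI m, isI m' & x == mmul (mmul m a) m']].

Definition sameJ (x a : mat) : bool := [forall y, inJ x y == inJ a y].

Definition inI (a x : mat) : bool := inJ a x && ~~ sameJ x a.

Definition inJmI (a x : mat) : bool := inJ a x && ~~ inI a x.

Definition inP (a x : mat) : bool := inJmI a x || (x == zero).

Definition lact (a m x : mat) : mat :=
  let y := mmul m x in if inJmI a y then y else zero.
Definition ract (a m x : mat) : mat :=
  let y := mmul x m in if inJmI a y then y else zero.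

(* An object of Vect_{\hat G}: the pointed set (P, z) with the action of
   \hat G in which 0 acts as z (constant) and g \in G acts by [act g];
   G must act (as a group action) freely on nonzero elements. *)
Definition vect_obj (P : pred mat) (act : gT -> mat -> mat) (z : mat) : Prop :=
  [/\ P z /\ (forall g x, P x -> P (act g x)),
      forall g, act g z = z,
      forall x, P x -> act 1%g x = x,
      forall g h x, P x -> act g (act h x) = act (g * h)%g x
    & forall g x, P x -> x != z -> act g x = x -> g = 1%g].

Definition vect_mor (P : pred mat) (act : gT -> mat -> mat) (z : mat)
    (f : mat -> mat) : Prop :=
  [/\ forall x, P x -> P (f x),
      f z = z,
      forall g x, P x -> f (act g x) = act g (f x)
    & forall x1 x2, P x1 -> P x2 -> f x1 = f x2 -> f x1 != z ->
        exists g, x1 = act g x2].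

Definition idempotent (e : mat) : bool := isI e && (mmul e e == e).

Definition left_inductive : Prop :=
  forall e, idempotent e ->
    vect_obj (inP e) (fun g => lact e (scal g)) zero /\
    forall m, isI m -> vect_mor (inP e) (fun g => lact e (scal g)) zero (lact e m).

Definition right_inductive : Prop :=
  forall e, idempotent e ->
    vect_obj (inP e) (fun g => ract e (scal g)) zero /\
    forall m, isI m -> vect_mor (inP e) (fun g => ract e (scal g)) zero (ract e m).

End RookMonoid.

From Pilot Require Import Defs.
From mathcomp Require Import all_boot all_fingroup.
Set Implicit Arguments. Unset Strict Implicit. Unset Printing Implicit Defensive.

(* Translation by a scalar g multiplies every entry by g; it is invertible
   inside M, so it preserves J-classes and P(e) is a free G-set on which the
   scalars act entrywise.  All nonzero elements of J(e) \ I(e) are in the same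
   J-class, hence have the same number of nonzero entries, and multiplying by
   a rook matrix never increases that number.  A product p x that keeps every
   nonzero entry of x determines x, so translations are injective on
   J(e) \ I(e), which is the morphism axiom with witness g = 1.  Right
   translations reduce to left ones by transposition, an anti-automorphism
   because G is abelian. *)

Section RookMonoidTranslations.
Variables (gT : finGroupType) (n : nat).
Local Notation mat := (mat gT n).
Local Notation zero := (zero gT n).
Implicit Types (g : gT) (x y z p q m e : mat).

Definition smul g x : mat := [ffun ij => omap (fun a => g * a)%g (x ij)].
Definition trmat x : mat := [ffun ij => x (ij.2, ij.1)].
Definition supp x : {set 'I_n * 'I_n} := [set ij | x ij != None].
Definition rank x := #|supp x|.

Lemma smul_neq0 g x ij : (smul g x ij != None) = (x ij != None).
Proof. by rewrite ffunE; case: (x ij). Qed.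

Lemma smul0 g : smul g zero = zero.
Proof. by apply/ffunP => ij; rewrite !ffunE. Qed.

Lemma smul1 x : smul 1%g x = x.
Proof. by apply/ffunP => ij; rewrite ffunE; case: (x ij) => //= a; rewrite mul1g. Qed.

Lemma smulA g h x : smul g (smul h x) = smul (g * h)%g x.
Proof. by apply/ffunP => ij; rewrite !ffunE; case: (x ij) => //= a; rewrite mulgA. Qed.

Lemma smulK g : cancel (smul g) (smul g^-1).
Proof. by move=> x; rewrite smulA mulVg smul1. Qed.

Lemma smul_fixed g x : x != zero -> smul g x = x -> g = 1%g.
Proof.
move=> + gx_x; apply: contraNeq => g_neq1; apply/eqP/ffunP => ij.
move/ffunP/(_ ij): gx_x; rewrite !ffunE; case: (x ij) => //= a [].
by move/(canRL (mulgK a)); rewrite mulgV => /eqP; rewrite (negbTE g_neq1).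
Qed.

Lemma isI_row_eq x i j j' :
  isI x -> x (i, j) != None -> x (i, j') != None -> j = j'.
Proof.
case/andP => /forallP/(_ i)/forallP/(_ j)/forallP/(_ j')/implyP rowx _ xij xij'.
by apply/eqP/rowx; rewrite xij xij'.
Qed.

Lemma isI_col_eq x i i' j :
  isI x -> x (i, j) != None -> x (i', j) != None -> i = i'.
Proof.
case/andP => _ /forallP/(_ j)/forallP/(_ i)/forallP/(_ i')/implyP colx xij xi'j.
by apply/eqP/colx; rewrite xij xi'j.
Qed.

Lemma isI_smul g x : isI (smul g x) = isI x.
Proof.
by congr (_ && _); do 3!apply: eq_forallb => ?; rewrite !smul_neq0.
Qed.

Lemma mmul_neq0 p z i k : mmul p z (i, k) != None ->
  exists j, p (i, j) != None /\ z (j, k) != None.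
Proof. by rewrite ffunE /=; case: pickP => [j /andP[pij zjk] _|//]; exists j. Qed.

Lemma mmul_Some p z i j k a b : isI p -> p (i, j) = Some a -> z (j, k) = Some b ->
  mmul p z (i, k) = Some (a * b)%g.
Proof.
move=> Ip pij zjk; rewrite ffunE /=; case: pickP => [j' /andP[pij' _]|none_j].
  by rewrite (isI_row_eq Ip pij' (_ : p (i, j) != None)) pij ?zjk.
by move: (none_j j); rewrite pij zjk.
Qed.

Lemma mmul_None p z i j k a : isI p -> p (i, j) = Some a -> z (j, k) = None ->
  mmul p z (i, k) = None.
Proof.
move=> Ip pij zjk; apply/eqP; apply: contraT => /mmul_neq0[j' [pij' zj'k]].
by move: zj'k; rewrite (isI_row_eq Ip pij' (_ : p (i, j) != None)) ?pij ?zjk.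
Qed.

Lemma mmulr0 p : mmul p zero = zero.
Proof.
by apply/ffunP => ik; rewrite !ffunE; case: pickP => [j /andP[_]|//]; rewrite ffunE.
Qed.

Lemma mmul0r p : mmul zero p = zero.
Proof.
by apply/ffunP => ik; rewrite !ffunE; case: pickP => [j /andP[]|//]; rewrite ffunE.
Qed.

Lemma mmul_smull g p x : mmul (smul g p) x = smul g (mmul p x).
Proof.
apply/ffunP => -[i k]; rewrite !ffunE /=.
under eq_pick do rewrite smul_neq0.
case: pickP => [j _|//]; rewrite ffunE.
by case: (p (i, j)) => //= a; case: (x (j, k)) => //= b; rewrite mulgA.
Qed.

Lemma mmul_scall g x : mmul (scal n g) x = smul g x.
Proof.
apply/ffunP => -[i k]; rewrite !ffunE /=; case: pickP => [j|none_j].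
  by rewrite ffunE /=; case: (i =P j) => [<-|_ /andP[]//]; case: (x (i, k)).
by move: (none_j i); rewrite ffunE eqxx /=; case: (x (i, k)).
Qed.

(* Column of the nonzero entry of row i of p; i itself when that row is zero. *)
Definition pivot p i := odflt i [pick j | p (i, j) != None].

Definition pivot_pos p (ik : 'I_n * 'I_n) := (pivot p ik.1, ik.2).

Lemma mmul_neq0_pivot p z i k : isI p -> mmul p z (i, k) != None ->
  p (i, pivot p i) != None /\ z (pivot p i, k) != None.
Proof.
move=> Ip /mmul_neq0[j [pij zjk]]; rewrite /pivot.
case: pickP => [j' pij'|none_j]; last by move: (none_j j); rewrite pij.
by rewrite (isI_row_eq Ip pij' pij).
Qed.

Lemma card_pivot_supp p z : isI p ->
  #|pivot_pos p @: supp (mmul p z)| = rank (mmul p z).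
Proof.
move=> Ip; apply: card_in_imset => -[i k] [i' k'].
rewrite !inE /= => pzik pzi'k' [eq_piv ->].
have [pi _] := mmul_neq0_pivot Ip pzik; have [pi' _] := mmul_neq0_pivot Ip pzi'k'.
by rewrite eq_piv in pi; rewrite (isI_col_eq Ip pi pi').
Qed.

Lemma pivot_supp_sub p z : isI p -> pivot_pos p @: supp (mmul p z) \subset supp z.
Proof.
move=> Ip; apply/subsetP => _ /imsetP[[i k] pzik ->]; rewrite inE in pzik.
by have [_ zjk] := mmul_neq0_pivot Ip pzik; rewrite inE.
Qed.

Lemma rank_mull p z : isI p -> rank (mmul p z) <= rank z.
Proof.
by move=> Ip; rewrite -(card_pivot_supp z Ip) subset_leq_card ?pivot_supp_sub.
Qed.

Lemma rank_mull_col p z j k : isI p -> rank (mmul p z) = rank z ->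
  z (j, k) != None -> exists i, p (i, j) != None.
Proof.
move=> Ip rank_eq zjk.
have : (j, k) \in pivot_pos p @: supp (mmul p z).
  suff -> : pivot_pos p @: supp (mmul p z) = supp z by rewrite inE.
  by apply/eqP; rewrite eqEcard pivot_supp_sub // card_pivot_supp // rank_eq leqnn.
case/imsetP => -[i k'] pzik [-> _]; rewrite inE in pzik.
by exists i; case: (mmul_neq0_pivot Ip pzik).
Qed.

Lemma mull_rank_entry p x1 x2 j k : isI p -> rank (mmul p x2) = rank x2 ->
  mmul p x1 = mmul p x2 -> x2 (j, k) != None -> x1 (j, k) = x2 (j, k).
Proof.
move=> Ip rank_eq px12 x2jk; have [i] := rank_mull_col Ip rank_eq x2jk.
case pij: (p (i, j)) => [a|] // _; case x2E: (x2 (j, k)) x2jk => [c|] // _.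
have := mmul_Some Ip pij x2E; rewrite -px12.
case x1E: (x1 (j, k)) => [b|]; last by rewrite (mmul_None Ip pij x1E).
by rewrite (mmul_Some Ip pij x1E) => -[/mulgI ->].
Qed.

Lemma mull_rankI p x1 x2 : isI p ->
  rank (mmul p x1) = rank x1 -> rank (mmul p x2) = rank x2 ->
  mmul p x1 = mmul p x2 -> x1 = x2.
Proof.
move=> Ip rank1 rank2 px12; apply/ffunP => -[j k].
have [x2jk|/negPn/eqP x2jk] := boolP (x2 (j, k) != None).
  exact: mull_rank_entry Ip rank2 px12 x2jk.
have [x1jk|/negPn/eqP -> //] := boolP (x1 (j, k) != None).
exact: esym (mull_rank_entry Ip rank1 (esym px12) x1jk).
Qed.

Lemma trmatK : involutive trmat.
Proof. by move=> x; apply/ffunP => -[i j]; rewrite !ffunE. Qed.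

Lemma isI_tr x : isI (trmat x) = isI x.
Proof.
by rewrite /isI andbC; congr (_ && _); do 3!apply: eq_forallb => ?; rewrite !ffunE.
Qed.

Lemma rank_tr x : rank (trmat x) = rank x.
Proof.
rewrite /rank.
have -> : supp (trmat x) = (fun ij : 'I_n * 'I_n => (ij.2, ij.1)) @^-1: supp x.
  by apply/setP => -[i j]; rewrite !inE ffunE.
by rewrite card_preimset // => -[a b] [c d] [-> ->].
Qed.

Hypothesis Gab : forall a b : gT, commute a b.

Lemma mmul_smulr g p x : mmul p (smul g x) = smul g (mmul p x).
Proof.
apply/ffunP => -[i k]; rewrite !ffunE /=.
under eq_pick do rewrite smul_neq0.
case: pickP => [j _|//]; rewrite ffunE.
by case: (p (i, j)) => //= a; case: (x (j, k)) => //= b; rewrite mulgA (Gab a g) mulgA.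
Qed.

Lemma mmul_scalr g x : mmul x (scal n g) = smul g x.
Proof.
apply/ffunP => -[i k]; rewrite !ffunE /=; case: pickP => [j|none_j].
  rewrite ffunE /=; case xij: (x (i, j)) => [a|] //=.
  by case: (j =P k) => [<-|//]; rewrite xij /= Gab.
by move: (none_j k); rewrite ffunE eqxx andbT; case: (x (i, k)).
Qed.

Lemma tr_mmul x y : trmat (mmul x y) = mmul (trmat y) (trmat x).
Proof.
apply/ffunP => -[k i]; rewrite !ffunE /=.
under [in RHS]eq_pick do rewrite !ffunE andbC.
case: pickP => [j _|//]; rewrite !ffunE /=.
by case: (x (i, j)) => [a|]; case: (y (j, k)) => [b|] //=; rewrite Gab.
Qed.

Lemma rank_mulr z q : isI q -> rank (mmul z q) <= rank z.
Proof. by move=> Iq; rewrite -rank_tr tr_mmul -(rank_tr z) rank_mull ?isI_tr. Qed.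

Lemma mulr_rankI q x1 x2 : isI q ->
  rank (mmul x1 q) = rank x1 -> rank (mmul x2 q) = rank x2 ->
  mmul x1 q = mmul x2 q -> x1 = x2.
Proof.
move=> Iq rank1 rank2 x12q; apply: (can_inj trmatK).
apply: (@mull_rankI (trmat q)); rewrite ?isI_tr // -?tr_mmul ?rank_tr //.
by rewrite x12q.
Qed.

Lemma inJ_smull g a y : inJ (smul g a) y = inJ a y.
Proof.
congr (_ && _); apply/existsP/existsP => -[m /existsP[m' /and3P[Im Im' /eqP->]]].
  by exists (smul g m); apply/existsP; exists m';
     rewrite isI_smul Im Im' mmul_smull mmul_smulr eqxx.
by exists (smul g^-1 m); apply/existsP; exists m';
   rewrite isI_smul Im Im' mmul_smull mmul_smulr smulK eqxx.
Qed.

Lemma inJ_smulr g a y : inJ a (smul g y) = inJ a y.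
Proof.
rewrite /inJ isI_smul; congr (_ && _); apply/existsP/existsP.
  case=> m /existsP[m' /and3P[Im Im' /eqP gy]]; exists (smul g^-1 m).
  by apply/existsP; exists m'; rewrite isI_smul Im Im' !mmul_smull -gy smulK eqxx.
case=> m /existsP[m' /and3P[Im Im' /eqP->]]; exists (smul g m).
by apply/existsP; exists m'; rewrite isI_smul Im Im' !mmul_smull eqxx.
Qed.

Lemma inJmI_smul e g x : inJmI e (smul g x) = inJmI e x.
Proof.
rewrite /inJmI /inI inJ_smulr; congr (_ && ~~ (_ && ~~ _)).
by apply: eq_forallb => y; rewrite inJ_smull.
Qed.

Lemma inJmIE e x : inJmI e x = inJ e x && sameJ x e.
Proof. by rewrite /inJmI /inI; case: (inJ e x); rewrite ?negbK. Qed.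

Lemma rank_inJmI_le e x y : inJmI e x -> inJmI e y -> rank y <= rank x.
Proof.
rewrite !inJmIE => /andP[_ /forallP/(_ y)/eqP Jx] /andP[+ _].
rewrite -Jx => /andP[_ /existsP[m /existsP[m' /and3P[Im Im' /eqP->]]]].
exact: leq_trans (rank_mulr _ Im') (rank_mull _ Im).
Qed.

Lemma rank_inJmI e x y : inJmI e x -> inJmI e y -> rank x = rank y.
Proof.
by move=> Jx Jy; apply/eqP; rewrite eqn_leq (rank_inJmI_le Jx Jy) (rank_inJmI_le Jy Jx).
Qed.

Lemma mull_inJmI_inj e m x1 x2 : isI m -> inJmI e x1 -> inJmI e x2 ->
  inJmI e (mmul m x1) -> mmul m x1 = mmul m x2 -> x1 = x2.
Proof.
move=> Im Jx1 Jx2 Jmx1 mx12; apply: (mull_rankI Im _ _ mx12).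
  exact: rank_inJmI Jmx1 Jx1.
by rewrite -mx12; apply: rank_inJmI Jx2.
Qed.

Lemma mulr_inJmI_inj e m x1 x2 : isI m -> inJmI e x1 -> inJmI e x2 ->
  inJmI e (mmul x1 m) -> mmul x1 m = mmul x2 m -> x1 = x2.
Proof.
move=> Im Jx1 Jx2 Jx1m x12m; apply: (mulr_rankI Im _ _ x12m).
  exact: rank_inJmI Jx1m Jx1.
by rewrite -x12m; apply: rank_inJmI Jx2.
Qed.

Definition restr e y := if inJmI e y then y else zero.

Lemma restr_inP e y : inP e (restr e y).
Proof. by rewrite /restr /inP; case: ifP => [->|_]; rewrite ?eqxx ?orbT. Qed.

Lemma restr_id e x : inP e x -> restr e x = x.
Proof. by rewrite /restr; case/orP => [->|/eqP->] //; case: ifP. Qed.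

Lemma restr_neq0 e y : restr e y != zero -> inJmI e y.
Proof. by rewrite /restr; case: ifP; rewrite ?eqxx. Qed.

Lemma restr_smul e g x : restr e (smul g x) = smul g (restr e x).
Proof. by rewrite /restr inJmI_smul; case: ifP; rewrite ?smul0. Qed.

Section RestrictedTranslations.
Variables (e : mat) (act : gT -> mat -> mat).
Hypothesis actE : forall g x, act g x = restr e (smul g x).

Lemma act_smul g x : inP e x -> act g x = smul g x.
Proof. by move=> Px; rewrite actE restr_smul restr_id. Qed.

Lemma vect_obj_restr : vect_obj (inP e) act zero.
Proof.
have P0 : inP e zero by rewrite /inP eqxx orbT.
have P_act g x : inP e (act g x) by rewrite actE restr_inP.
split=> [//|g|x Px|g h x Px|g x Px].
- by rewrite act_smul ?smul0.
- by rewrite act_smul ?smul1.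
- by rewrite act_smul // !act_smul ?smulA.
- by rewrite act_smul //; apply: smul_fixed.
Qed.

Lemma vect_mor_restr (T : mat -> mat) :
  (forall g x, T (smul g x) = smul g (T x)) -> T zero = zero ->
  (forall x1 x2, inJmI e x1 -> inJmI e x2 -> inJmI e (T x1) -> T x1 = T x2 -> x1 = x2) ->
  vect_mor (inP e) act zero (restr e \o T).
Proof.
move=> Tsmul T0 T_inj; have [[P0 _] _ act1 _ _] := vect_obj_restr.
have restr0 : restr e zero = zero by rewrite restr_id.
have JmI_of_restr x : inP e x -> restr e (T x) != zero -> inJmI e x.
  by case/orP => [//|/eqP->]; rewrite T0 restr0 eqxx.
split=> [x _|/=|g x Px /=|x1 x2 Px1 Px2 /= fx12 fx1_neq0].
- exact: restr_inP.
- by rewrite T0.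
- by rewrite !act_smul ?restr_inP // Tsmul restr_smul.
have JTx1 := restr_neq0 fx1_neq0.
have JTx2 : inJmI e (T x2) by apply: restr_neq0; rewrite -fx12.
have Tx12 : T x1 = T x2 by move: fx12; rewrite /restr JTx1 JTx2.
exists 1%g; rewrite act1 //; apply: T_inj Tx12 => //; apply: JmI_of_restr => //.
by rewrite -fx12.
Qed.

End RestrictedTranslations.

End RookMonoidTranslations.

Theorem mainTheorem10 (gT : finGroupType) (n : nat) :
  abelian [set: gT] -> 0 < n ->
  left_inductive gT n /\ right_inductive gT n.
Proof.
move=> /centsP cGG _.
have Gab (a b : gT) : commute a b by apply: cGG; rewrite inE.
have lactE (e : mat gT n) g x : lact e (scal n g) x = restr e (smul g x).
  by rewrite /lact mmul_scall.
have ractE (e : mat gT n) g x : Defs.ract e (scal n g) x = restr e (smul g x).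
  by rewrite /Defs.ract (mmul_scalr Gab).
split=> e _; split=> [|m Im].
- exact: vect_obj_restr Gab _ _ (lactE e).
- apply: (vect_mor_restr Gab (lactE e) (T := mmul m)) => [g x||x1 x2].
  + exact: mmul_smulr.
  + exact: mmulr0.
  + exact: mull_inJmI_inj.
- exact: vect_obj_restr Gab _ _ (ractE e).
- apply: (vect_mor_restr Gab (ractE e) (T := fun x => mmul x m)) => [g x||x1 x2].
  + exact: mmul_smull.
  + exact: mmul0r.
  + exact: mulr_inJmI_inj.
Qed.
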